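(* Let $\mathbf{u}=(u_1,u_2)\in\mathbb{R}[x_1,x_2]_d^2$ and $p\in\Sigma[x_1,x_2]_{2d}$, and suppose $\nabla f_p(\mathbf{u})=0$ and $\nabla^2 f_p(\mathbf{u})\succeq 0$. If $$p\in\operatorname{im}(\mathcal{A}_{\mathbf{u}})+\operatorname{cone}\big(\sigma(\ker(\mathcal{A}_{\mathbf{u}}))\big),$$ then $f_p(\mathbf{u})=0$.
   Context: $\mathbb{R}[x_1,x_2]_n$ denotes the space of real binary forms of degree $n$, and $\Sigma[x_1,x_2]_{2d}$ the cone of sums of squares of binary forms of degree $d$. $\mathcal{A}_{\mathbf{u}}:\mathbb{R}[x_1,x_2]_d^2\to\mathbb{R}[x_1,x_2]_{2d}$ is the linear map $(v_1,v_2)\mapsto u_1v_1+u_2v_2$, and $\sigma:\mathbb{R}[x_1,x_2]_d^2\to\mathbb{R}[x_1,x_2]_{2d}$ is $(v_1,v_2)\mapsto v_1^2+v_2^2$; $\operatorname{cone}(S)$ is the convex cone generated by $S$ (nonnegative combinations). Fix any inner product $\langle\cdot,\cdot\rangle$ on $\mathbb{R}[x_1,x_2]_{2d}$ with norm $\|\cdot\|$ and let $f_p(\mathbf{u})=\|\sigma(\mathbf{u})-p\|^2$. Derivatives are with respect to the vector space $\mathbb{R}[x_1,x_2]_d^2$: $\nabla f_p(\mathbf{u})=0$ means $\langle\mathcal{A}_{\mathbf{u}}(\mathbf{v}),\sigma(\mathbf{u})-p\rangle=0$ for all $\mathbf{v}$, and $\nabla^2 f_p(\mathbf{u})\succeq0$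 means $\langle\sigma(\mathbf{v}),\sigma(\mathbf{u})-p\rangle+2\|\mathcal{A}_{\mathbf{u}}(\mathbf{v})\|^2\ge0$ for all $\mathbf{v}\in\mathbb{R}[x_1,x_2]_d^2$. *)

From HB Require Import structures.
From mathcomp Require Import all_boot all_order all_algebra.
From mathcomp Require Import reals.
From mathcomp Require Import mpoly.
Set Implicit Arguments. Unset Strict Implicit. Unset Printing Implicit Defensive.
Import Order.TTheory GRing.Theory Num.Theory.
Local Open Scope ring_scope.

(* Binary forms: elements of {mpoly R[2]} (variables x_1, x_2).
   R[x1,x2]_n is the subspace of polynomials homogeneous of degree n
   (the zero polynomial included). *)
Definition bform (R : realType) (n : nat) (p : {mpoly R[2]}) : Prop :=
  p \is n.-homog.

(* An inner product on R[x1,x2]_n, given as a function on {mpoly R[2]}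
   whose behaviour is only constrained on forms of degree n. *)
Definition is_inner_product (R : realType) (n : nat)
    (ip : {mpoly R[2]} -> {mpoly R[2]} -> R) : Prop :=
  [/\ (forall p q, bform n p -> bform n q -> ip p q = ip q p),
      (forall (a : R) p q r, bform n p -> bform n q -> bform n r ->
         ip (a *: p + q) r = a * ip p r + ip q r)
    & (forall p, bform n p -> p != 0 -> 0 < ip p p)].

Definition A_op (R : realType) (u1 u2 v1 v2 : {mpoly R[2]}) : {mpoly R[2]} :=
  u1 * v1 + u2 * v2.

Definition sigma_op (R : realType) (v1 v2 : {mpoly R[2]}) : {mpoly R[2]} :=
  v1 ^+ 2 + v2 ^+ 2.

Definition f_p (R : realType) (ip : {mpoly R[2]} -> {mpoly R[2]} -> R)
    (p u1 u2 : {mpoly R[2]}) : R :=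
  ip (sigma_op u1 u2 - p) (sigma_op u1 u2 - p).

Definition is_sos (R : realType) (d : nat) (p : {mpoly R[2]}) : Prop :=
  exists s : seq {mpoly R[2]},
    (forall q, q \in s -> bform d q) /\ p = \sum_(q <- s) q ^+ 2.

Definition grad_zero (R : realType) (d : nat)
    (ip : {mpoly R[2]} -> {mpoly R[2]} -> R) (p u1 u2 : {mpoly R[2]}) : Prop :=
  forall v1 v2, bform d v1 -> bform d v2 ->
    ip (A_op u1 u2 v1 v2) (sigma_op u1 u2 - p) = 0.

Definition hess_psd (R : realType) (d : nat)
    (ip : {mpoly R[2]} -> {mpoly R[2]} -> R) (p u1 u2 : {mpoly R[2]}) : Prop :=
  forall v1 v2, bform d v1 -> bform d v2 ->
    0 <= ip (sigma_op v1 v2) (sigma_op u1 u2 - p)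
         + 2 * ip (A_op u1 u2 v1 v2) (A_op u1 u2 v1 v2).

(* p in im(A_u) + cone(sigma(ker A_u)):
   p = A_u(w) + sum_i c_i sigma(k_i) with w in R[x]_d^2, c_i >= 0,
   k_i in R[x]_d^2 with A_u(k_i) = 0 (finite nonnegative combination). *)
Definition in_im_plus_cone (R : realType) (d : nat)
    (p u1 u2 : {mpoly R[2]}) : Prop :=
  exists (w1 w2 : {mpoly R[2]})
         (s : seq (R * ({mpoly R[2]} * {mpoly R[2]}))),
    [/\ bform d w1, bform d w2,
        (forall t, t \in s ->
           [/\ 0 <= t.1, bform d t.2.1, bform d t.2.2
             & A_op u1 u2 t.2.1 t.2.2 = 0])
      & p = A_op u1 u2 w1 w2
            + \sum_(t <- s) t.1 *: sigma_op t.2.1 t.2.2].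

(* Write r := sigma(u) - p.  Since A_u(u) = sigma(u), the gradient condition
   gives <sigma(u), r> = 0 and <A_u(w), r> = 0, while for k in ker A_u the
   Hessian condition loses its ||A_u(k)||^2 term and reads <sigma(k), r> >= 0.
   Hence p = A_u(w) + sum_i c_i sigma(k_i) satisfies <p, r> >= 0, so
   f_p(u) = <r, r> = <sigma(u), r> - <p, r> = -<p, r> <= 0. *)

From HB Require Import structures.
From mathcomp Require Import all_boot all_order all_algebra.
From mathcomp Require Import reals.
From mathcomp Require Import mpoly.
Import Order.TTheory GRing.Theory Num.Theory.
Local Open Scope ring_scope.

Lemma bform0 {R : realType} n : bform n (0 : {mpoly R[2]}).
Proof. exact: rpred0. Qed.

Lemma bformM {R : realType} {m n} {p q : {mpoly R[2]}} :
  bform m p -> bform n q -> bform (m + n) (p * q).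
Proof. exact: dhomogM. Qed.

Lemma bform_A_op {R : realType} {d} {u1 u2 v1 v2 : {mpoly R[2]}} :
  bform d u1 -> bform d u2 -> bform d v1 -> bform d v2 ->
  bform (2 * d) (A_op u1 u2 v1 v2).
Proof.
by move=> hu1 hu2 hv1 hv2; rewrite mul2n -addnn; apply: rpredD; apply: bformM.
Qed.

Lemma sigma_opE {R : realType} (v1 v2 : {mpoly R[2]}) :
  sigma_op v1 v2 = A_op v1 v2 v1 v2.
Proof. by rewrite /sigma_op /A_op !expr2. Qed.

Lemma bform_sigma_op {R : realType} {d} {v1 v2 : {mpoly R[2]}} :
  bform d v1 -> bform d v2 -> bform (2 * d) (sigma_op v1 v2).
Proof. by move=> hv1 hv2; rewrite sigma_opE; apply: bform_A_op. Qed.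

Lemma bform_sos {R : realType} {d} {p : {mpoly R[2]}} :
  is_sos d p -> bform (2 * d) p.
Proof.
case=> s [hs ->]; rewrite big_seq; apply: rpred_sum => q /hs hq.
by rewrite expr2 mul2n -addnn; apply: bformM.
Qed.

Section InnerProduct.

Context {R : realType} {n : nat} {ip : {mpoly R[2]} -> {mpoly R[2]} -> R}.
Hypothesis ip_inner : is_inner_product n ip.

Lemma ipDl {p q r} : bform n p -> bform n q -> bform n r ->
  ip (p + q) r = ip p r + ip q r.
Proof.
case: ip_inner => _ ipL _ hp hq hr.
by have := ipL 1 p q r hp hq hr; rewrite scale1r mul1r.
Qed.

Lemma ip0l r : bform n r -> ip 0 r = 0.
Proof.
move=> hr; have /esym/eqP := ipDl (bform0 n) (bform0 n) hr.
by rewrite addr0 -subr_eq0 addrK => /eqP.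
Qed.

Lemma ipZl a {p r} : bform n p -> bform n r -> ip (a *: p) r = a * ip p r.
Proof.
case: ip_inner => _ ipL _ hp hr.
by have := ipL a p 0 r hp (bform0 n) hr; rewrite ip0l // !addr0.
Qed.

Lemma ipBl {p q r} : bform n p -> bform n q -> bform n r ->
  ip (p - q) r = ip p r - ip q r.
Proof.
move=> hp hq hr; have hNq : bform n (- q) by rewrite /bform rpredN.
by rewrite ipDl // -scaleN1r ipZl // mulN1r.
Qed.

Lemma ip_ge0 {p} : bform n p -> 0 <= ip p p.
Proof.
case: ip_inner => _ _ ipP hp.
have [->|p_neq0] := eqVneq p 0; last exact/ltW/ipP.
by rewrite ip0l //; exact: bform0.
Qed.

Lemma ip_sum_ge0 (I : eqType) (s : seq I) (F : I -> {mpoly R[2]}) r :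
  bform n r -> (forall i, i \in s -> bform n (F i) /\ 0 <= ip (F i) r) ->
  0 <= ip (\sum_(i <- s) F i) r.
Proof.
move=> hr hF; rewrite big_seq.
suff [] : bform n (\sum_(i <- s | i \in s) F i) /\
          0 <= ip (\sum_(i <- s | i \in s) F i) r by [].
apply: (big_ind (fun x => bform n x /\ 0 <= ip x r)) => //.
- by split; [exact: bform0 | rewrite ip0l //; exact: bform0].
- move=> x y [hx x_ge0] [hy y_ge0].
  by split; [exact: rpredD | rewrite ipDl // addr_ge0].
Qed.

End InnerProduct.

Section CriticalPoint.

Context {R : realType} {d : nat} {ip : {mpoly R[2]} -> {mpoly R[2]} -> R}.
Context {u1 u2 p : {mpoly R[2]}}.
Hypothesis ip_inner : is_inner_product (2 * d) ip.
Hypotheses (hu1 : bform d u1) (hu2 : bform d u2) (hp : bform (2 * d) p).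
Hypothesis grad : grad_zero d ip p u1 u2.
Hypothesis hess : hess_psd d ip p u1 u2.

Lemma bform_residual : bform (2 * d) (sigma_op u1 u2 - p).
Proof. by apply: rpredB => //; apply: bform_sigma_op. Qed.

Lemma grad_zero_sigma : ip (sigma_op u1 u2) (sigma_op u1 u2 - p) = 0.
Proof. by rewrite {1}sigma_opE; apply: grad. Qed.

Lemma hess_psd_ker {k1 k2} : bform d k1 -> bform d k2 ->
  A_op u1 u2 k1 k2 = 0 -> 0 <= ip (sigma_op k1 k2) (sigma_op u1 u2 - p).
Proof.
move=> hk1 hk2 hk; have := hess k1 k2 hk1 hk2.
by rewrite hk (ip0l ip_inner 0 (bform0 _)) mulr0 addr0.
Qed.

Lemma ip_im_plus_cone_ge0 :
  in_im_plus_cone d p u1 u2 -> 0 <= ip p (sigma_op u1 u2 - p).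
Proof.
case=> w1 [w2 [s [hw1 hw2 hs def_p]]].
have hr := bform_residual; rewrite [X in ip X]def_p (ipDl ip_inner) //.
- rewrite grad // add0r.
  apply: (ip_sum_ge0 ip_inner) => // t /hs[c_ge0 hk1 hk2 hk].
  have hsk := bform_sigma_op hk1 hk2.
  split; first exact: rpredZ.
  by rewrite (ipZl ip_inner) // mulr_ge0 // hess_psd_ker.
- exact: bform_A_op.
- rewrite big_seq; apply: rpred_sum => t /hs[_ hk1 hk2 _].
  exact/rpredZ/bform_sigma_op.
Qed.

Lemma f_p_eq0_of_ip_ge0 : 0 <= ip p (sigma_op u1 u2 - p) -> f_p ip p u1 u2 = 0.
Proof.
move=> ip_p_ge0; have hr := bform_residual.
have hsu : bform (2 * d) (sigma_op u1 u2) := bform_sigma_op hu1 hu2.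
apply/eqP; rewrite /f_p eq_le (ip_ge0 ip_inner) // andbT.
by rewrite {1}(ipBl ip_inner) // grad_zero_sigma sub0r oppr_le0.
Qed.

End CriticalPoint.

Theorem proposition4p2 (R : realType) (d : nat)
    (ip : {mpoly R[2]} -> {mpoly R[2]} -> R)
    (u1 u2 p : {mpoly R[2]}) :
  is_inner_product (2 * d) ip ->
  bform d u1 -> bform d u2 ->
  is_sos d p ->
  grad_zero d ip p u1 u2 ->
  hess_psd d ip p u1 u2 ->
  in_im_plus_cone d p u1 u2 ->
  f_p ip p u1 u2 = 0.
Proof.
move=> ip_inner hu1 hu2 /bform_sos hp grad hess hcone.
apply: (f_p_eq0_of_ip_ge0 ip_inner hu1 hu2 hp grad).
exact: (ip_im_plus_cone_ge0 ip_inner hu1 hu2 hp grad hess).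
Qed.
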